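(* Let $p$ be a prime, $d\ge1$, and $\boldsymbol n\in\mathbb{Z}^d$. Let $(a_k)_{k\in\mathbb{Z}}$ be elements of $\mathbb{Z}_p$ such that for all integers $l$ and $s\ge0$, $$\sum_{k:\ \lfloor k/p^s\rfloor=l}a_k\equiv0\pmod{p^s}.$$ Let $C:\mathbb{Z}^d\times\mathbb{Z}\to\mathbb{Z}_p$ be such that for all $k\in\mathbb{Z}$ and integers $r\ge1$, $$C(p^r\boldsymbol n;k)\equiv C(p^{r-1}\boldsymbol n;\lfloor k/p\rfloor)\pmod{p^r}.$$ Then for all integers $l$ and $r\ge0$, $$\sum_{k:\ \lfloor k/p^r\rfloor=l}a_k\,C(p^r\boldsymbol n;k)\equiv0\pmod{p^r}.$$
   Context: $\mathbb{Z}_p$ denotes the $p$-adic integers and $\lfloor x\rfloor$ the floor function; each sum over $\{k:\lfloor k/p^s\rfloor=l\}$ is a finite sum over the $p^s$ integers $k=lp^s,\dots,lp^s+p^s-1$. *)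

From HB Require Import structures.
From mathcomp Require Import all_boot all_order all_algebra.
Set Implicit Arguments. Unset Strict Implicit. Unset Printing Implicit Defensive.
Import Order.TTheory GRing.Theory Num.Theory.

(* The p-adic integers Z_p, realised as the inverse limit of the Z/p^n:
   a p-adic integer is a coherent sequence of residues x_n in [0, p^n)
   (stored as x_n = x_n %% p^n), with x_{n+1} = x_n mod p^n. *)
Record zp (p : nat) := Zp {
  zp_res : nat -> nat;
  zp_norm : forall n, zp_res n %% p ^ n = zp_res n;
  zp_coh : forall n, zp_res n.+1 %% p ^ n = zp_res n }.

Section ZpOps.
Variable p : nat.

Lemma zp0_norm n : 0 %% p ^ n = 0. Proof. by rewrite mod0n. Qed.
Lemma zp0_coh n : 0 %% p ^ n = 0. Proof. by rewrite mod0n. Qed.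
Definition zp0 : zp p := @Zp p (fun _ => 0) zp0_norm zp0_coh.

Lemma dvd_pexp n : p ^ n %| p ^ n.+1.
Proof. by rewrite expnS dvdn_mull. Qed.

Section Bin.
Variables x y : zp p.

Lemma zp_add_norm n :
  ((zp_res x n + zp_res y n) %% p ^ n) %% p ^ n = (zp_res x n + zp_res y n) %% p ^ n.
Proof. by rewrite modn_mod. Qed.
Lemma zp_add_coh n :
  ((zp_res x n.+1 + zp_res y n.+1) %% p ^ n.+1) %% p ^ n
  = (zp_res x n + zp_res y n) %% p ^ n.
Proof. by rewrite modn_dvdm ?dvd_pexp // -modnDm !zp_coh. Qed.
Definition zp_add : zp p :=
  @Zp p (fun n => (zp_res x n + zp_res y n) %% p ^ n) zp_add_norm zp_add_coh.

Lemma zp_mul_norm n :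
  ((zp_res x n * zp_res y n) %% p ^ n) %% p ^ n = (zp_res x n * zp_res y n) %% p ^ n.
Proof. by rewrite modn_mod. Qed.
Lemma zp_mul_coh n :
  ((zp_res x n.+1 * zp_res y n.+1) %% p ^ n.+1) %% p ^ n
  = (zp_res x n * zp_res y n) %% p ^ n.
Proof. by rewrite modn_dvdm ?dvd_pexp // -modnMm !zp_coh. Qed.
Definition zp_mul : zp p :=
  @Zp p (fun n => (zp_res x n * zp_res y n) %% p ^ n) zp_mul_norm zp_mul_coh.
End Bin.

Definition zp_sum (s : seq (zp p)) : zp p := foldr zp_add zp0 s.

(* x = y (mod p^s) in Z_p : x and y have the same image in Z_p / p^s Z_p = Z/p^s. *)
Definition zp_eqmod (s : nat) (x y : zp p) : Prop := zp_res x s = zp_res y s.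

(* The finite index set {k in Z : floor(k / p^s) = l}, i.e. the p^s integers
   k = l p^s, ..., l p^s + p^s - 1. *)
Definition block (s : nat) (l : int) : seq int :=
  [seq (l * (p ^ s)%:Z + i%:Z)%R | i <- iota 0 (p ^ s)].
End ZpOps.

From HB Require Import structures.
From mathcomp Require Import all_boot all_order all_algebra.
From mathcomp Require Import ring.
Import Order.TTheory GRing.Theory Num.Theory.

(* Reducing modulo p^r, every p-adic quantity becomes a
   natural number residue, so the theorem is a statement about natural
   numbers: if a : Z -> N has all its p^s-block sums divisible by p^s
   (s <= r), and c_j : Z -> N satisfy c_j(k) = c_{j-1}(k div p) mod p^j,
   then the p^r-block sums of a * c_r are divisible by p^r.  Replacing c_r(k) by c_{r-1}(k div p)
   and grouping the block of length p^r into p^{r-1} runs of p consecutive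
   indices (on which k div p is constant), the sum becomes
   sum_j (sum_t a(jp+t)) c_{r-1}(j) = p * sum_j b(j) c_{r-1}(j), where
   b(j) = (sum_t a(jp+t)) / p is the "coarsened" sequence.  The sequence b
   again has p^s-block sums divisible by p^s, so induction applies. *)

Lemma sum_nat_runs (f : nat -> nat) (m p : nat) :
  \sum_(0 <= i < m * p) f i = \sum_(0 <= j < m) \sum_(0 <= t < p) f (j * p + t).
Proof.
elim: m => [|m IH]; first by rewrite mul0n !big_geq.
rewrite big_nat_recr //= -IH mulSn addnC (big_cat_nat _ (n:=m * p)) ?leq_addr //=.
congr (_ + _).
rewrite -{1}(add0n (m * p)) big_addn addnC addnK.
by apply: eq_bigr => i _; rewrite addnC.
Qed.

Section BlockSums.
Variable p : nat.
Hypothesis p_gt0 : (0 < p)%N.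

Definition bsum (s : nat) (l : int) (f : int -> nat) : nat :=
  \sum_(0 <= i < p ^ s) f (l * (p ^ s)%:Z + i%:Z)%R.

Definition run_sum (f : int -> nat) (M : int) : nat :=
  \sum_(0 <= t < p) f (M * p%:Z + t%:Z)%R.

Lemma block_index_run (l : int) (s j t : nat) :
  ((l * (p ^ s)%:Z + j%:Z) * p%:Z + t%:Z = l * (p ^ s.+1)%:Z + (j * p + t)%:Z)%R.
Proof. rewrite expnSr !PoszD !PoszM; ring. Qed.

Lemma run_index_div (M : int) (t : nat) : (t < p)%N ->
  ((M * p%:Z + t%:Z) %/ p%:Z)%Z = M.
Proof. by move=> ht; rewrite divzMDl ?divz_small ?addr0 // -lt0n. Qed.

Lemma bsum_runs (s : nat) (l : int) (a w : int -> nat) :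
  bsum s.+1 l (fun k => a k * w (k %/ p%:Z)%Z)
  = bsum s l (fun M => run_sum a M * w M).
Proof.
rewrite /bsum {1}expnSr sum_nat_runs; apply: eq_bigr => j _.
rewrite big_distrl /=; apply: eq_big_nat => t /andP[_ ht].
by rewrite -block_index_run run_index_div.
Qed.

Definition block_dvd (r : nat) (a : int -> nat) : Prop :=
  forall (l : int) (s : nat), (s <= r)%N -> p ^ s %| bsum s l a.

Definition coarsen (a : int -> nat) (M : int) : nat := run_sum a M %/ p.

(* Level-1 divisibility says p divides each run sum, so nothing is lost. *)
Lemma run_sum_coarsen (r : nat) (a : int -> nat) (M : int) :
  block_dvd r.+1 a -> run_sum a M = p * coarsen a M.
Proof.
move=> ha; rewrite mulnC divnK //.
by have := ha M 1%N isT; rewrite /bsum expn1 /run_sum.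
Qed.

Lemma block_dvd_coarsen (r : nat) (a : int -> nat) :
  block_dvd r.+1 a -> block_dvd r (coarsen a).
Proof.
move=> ha l s hs; have := ha l s.+1 hs.
have -> : bsum s.+1 l a = p * bsum s l (coarsen a).
  have := bsum_runs s l a (fun=> 1%N); rewrite /bsum !big_distrr /=.
  under eq_bigr do rewrite muln1; move->.
  by apply: eq_bigr => j _; rewrite muln1 (run_sum_coarsen _ _ _ ha).
by rewrite expnS dvdn_pmul2l.
Qed.

Lemma block_sum_weighted_dvd (r : nat) (c : nat -> int -> nat) (a : int -> nat) :
  (forall j k, (0 < j <= r)%N -> c j k = c j.-1 (k %/ p%:Z)%Z %[mod p ^ j]) ->
  block_dvd r a ->
  forall l, p ^ r %| bsum r l (fun k => a k * c r k).
Proof.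
elim: r c a => [|r IH] c a hc ha l; first by rewrite expn0 dvd1n.
have drop_level : bsum r.+1 l (fun k => a k * c r.+1 k)
    = bsum r.+1 l (fun k => a k * c r (k %/ p%:Z)%Z) %[mod p ^ r.+1].
  rewrite -modn_summ -[in RHS]modn_summ; congr (_ %% _); apply: eq_bigr => i _.
  by rewrite -modnMmr -[in RHS]modnMmr hc ?leqnn.
have regroup : bsum r.+1 l (fun k => a k * c r (k %/ p%:Z)%Z)
    = p * bsum r l (fun M => coarsen a M * c r M).
  rewrite bsum_runs /bsum big_distrr /=; apply: eq_bigr => j _.
  by rewrite (run_sum_coarsen _ _ _ ha) mulnA.
rewrite /dvdn drop_level -/(dvdn _ _) regroup expnS dvdn_pmul2l //.
apply: IH; last exact: block_dvd_coarsen.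
by move=> j k /andP[j0 jr]; apply: hc; rewrite j0 ltnW.
Qed.

End BlockSums.

(* Residues of a p-adic integer at lower levels are obtained by reduction;
   this lets all residues be read at the single level r of the theorem. *)
Lemma zp_res_le {p : nat} (x : zp p) {m n : nat} : (m <= n)%N ->
  zp_res x m = zp_res x n %% p ^ m.
Proof.
move=> /subnKC <-; elim: (n - m) => [|k IH]; first by rewrite addn0 zp_norm.
rewrite IH addnS -(zp_coh x (m + k)) modn_dvdm //.
by apply: dvdn_exp2l; rewrite leq_addr.
Qed.

Lemma zp_res_sum (p : nat) (s : seq (zp p)) (n : nat) :
  zp_res (zp_sum s) n = (\sum_(x <- s) zp_res x n) %% p ^ n.
Proof.
elim: s => [|x s IH]; first by rewrite big_nil mod0n.
by rewrite big_cons /= IH modnDmr.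
Qed.

Lemma zp_block_sum_eqmod0 {p : nat} (r : nat) {s : nat} {l : int}
    {f : int -> zp p} : (s <= r)%N ->
  zp_eqmod s (zp_sum [seq f k | k <- block p s l]) (zp0 p)
  <-> p ^ s %| bsum p s l (fun k => zp_res (f k) r).
Proof.
move=> hs; rewrite /zp_eqmod zp_res_sum /block !big_map /bsum /index_iota subn0 /=.
have -> : \sum_(i <- iota 0 (p ^ s)) zp_res (f (l * (p ^ s)%:Z + i%:Z)%R) s
    = \sum_(i <- iota 0 (p ^ s)) zp_res (f (l * (p ^ s)%:Z + i%:Z)%R) r %[mod p ^ s].
  rewrite -modn_summ -[RHS]modn_summ; congr (_ %% _).
  by apply: eq_bigr => i _; rewrite (zp_res_le _ hs) modn_mod.
by rewrite /dvdn; split=> /eqP.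
Qed.

Theorem lemma5p6 (p d : nat) (hp : prime p) (hd : (0 < d)%N)
  (n : 'rV[int]_d) (a : int -> zp p) (C : 'rV[int]_d -> int -> zp p)
  (ha : forall (l : int) (s : nat),
      zp_eqmod s (zp_sum [seq a k | k <- block p s l]) (zp0 p))
  (hC : forall (k : int) (r : nat), (1 <= r)%N ->
      zp_eqmod r (C (((p ^ r)%:Z) *: n)%R k)
                 (C (((p ^ r.-1)%:Z) *: n)%R (k %/ p%:Z)%Z)) :
  forall (l : int) (r : nat),
    zp_eqmod r (zp_sum [seq zp_mul (a k) (C (((p ^ r)%:Z) *: n)%R k) | k <- block p r l])
             (zp0 p).
Proof.
move=> l r; apply/(zp_block_sum_eqmod0 r (leqnn r)) => /=.
rewrite /dvdn /bsum modn_summ -/(dvdn _ _).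
apply: (block_sum_weighted_dvd p (prime_gt0 hp) r
          (fun j k => zp_res (C ((p ^ j)%:Z *: n)%R k) r) (fun k => zp_res (a k) r)).
- move=> j k /andP[j0 jr]; rewrite -!zp_res_le //; exact: hC.
- by move=> l' s hs; apply/(zp_block_sum_eqmod0 r hs).
Qed.
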